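(* Suppose $H$ is a degenerate hypergraph. Then every subgraph of $H$ is degenerate, and every blowup $H(s_1,\dots,s_m)$ of $H$ is degenerate. Moreover, any subgraph of a blowup of a flag is degenerate.
   Context: A hypergraph $H=(V,E)$ has finite vertex set $V$ and edge set $E\subseteq 2^V$; $R(H)=\{|F|:F\in E\}$. $H_1\subseteq H_2$ (subgraph) means there is an injective $f\colon V(H_1)\to V(H_2)$ with $f(F)\in E(H_2)$ for all $F\in E(H_1)$. For $G$ on $n$ vertices, $h_n(G)=\sum_{F\in E(G)}1/\binom{n}{|F|}$; $\pi_n(H)=\max\{h_n(G): G\text{ on } n \text{ vertices}, R(G)\subseteq R(H), H\not\subseteq G\}$ and $\pi(H)=\lim_n\pi_n(H)$. $H$ is degenerate if $\pi(H)=|R(H)|-1$. For $H$ on vertex set $\{1,\dots,m\}$ and positive integers $s_i$, the blowup $H(s_1,\dots,s_m)$ has vertex set $V_1\sqcup\dots\sqcup V_m$, $|V_i|=s_i$, and edge set $\bigcup_{F\in E(H)}\prod_{i\in F}V_i$. A flag is a hypergraph having exactly one edge of each size in its set of edge types. *)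

From HB Require Import structures.
From mathcomp Require Import all_boot all_order all_algebra.
From mathcomp Require Import all_classical all_reals all_analysis.
Set Implicit Arguments. Unset Strict Implicit. Unset Printing Implicit Defensive.
Import Order.TTheory GRing.Theory Num.Theory.
Import numFieldNormedType.Exports.
Local Open Scope ring_scope.

(* A hypergraph on the finite vertex type V is its edge set E ⊆ 2^V,
   i.e. an element of {set {set V}}. *)

Definition edge_types (V : finType) (H : {set {set V}}) : seq nat :=
  undup [seq #|F| | F : {set V} in H].

Definition subgraph (V1 V2 : finType) (H1 : {set {set V1}}) (H2 : {set {set V2}})
  : bool :=
  [exists f : {ffun V1 -> V2}, injectiveb f && [forall F in H1, (f @: F) \in H2]].

Definition hdens (R : realType) (n : nat) (G : {set {set 'I_n}}) : R :=
  \sum_(F in G) ('C(n, #|F|))%:R^-1.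

(* pi_n(H): maximum of h_n(G) over G on n vertices with R(G) ⊆ R(H)
   and H not a subgraph of G (values are >= 0, so 0 is a neutral start). *)
Definition pi_n (R : realType) (V : finType) (H : {set {set V}}) (n : nat) : R :=
  \big[Num.max/0]_(G : {set {set 'I_n}} |
        all (fun k => k \in edge_types H) (edge_types G) && ~~ subgraph H G)
     hdens R G.

Local Open Scope classical_set_scope.
Definition degenerate (R : realType) (V : finType) (H : {set {set V}}) : Prop :=
  pi_n R H @ \oo --> ((size (edge_types H))%:R - 1 : R).

Local Close Scope classical_set_scope.

(* Blowup H(s): vertex set {i : V & 'I_(s i)} = disjoint union of the V_i;
   edges are {(i, g i) : i in F} for F in E(H) and g a choice of one vertex
   in each part, i.e. the union over F of prod_{i in F} V_i. *)
Definition blowup (V : finType) (H : {set {set V}}) (s : V -> nat)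
  : {set {set {i : V & 'I_(s i)}}} :=
  [set S : {set {i : V & 'I_(s i)}} |
     [exists F in H, exists g : {dffun forall i : V, 'I_(s i)},
        S == [set Tagged (fun i => 'I_(s i)) (g i) | i in F]]].

Definition is_flag (V : finType) (H : {set {set V}}) : Prop :=
  forall F1 F2, F1 \in H -> F2 \in H -> #|F1| = #|F2| -> F1 = F2.

From HB Require Import structures.
From mathcomp Require Import all_boot all_order all_algebra all_fingroup.
From mathcomp Require Import all_classical all_reals all_analysis.
From mathcomp Require Import lra zify ring.
Import Order.TTheory GRing.Theory Num.Theory.
Set Implicit Arguments. Unset Strict Implicit. Unset Printing Implicit Defensive.
Local Open Scope ring_scope.

(* The bound [pi_n(H) >= |R(H)| - 1] always holds for [n >= |V(H)|]: take the
   complete layers of all edge sizes of [H] but one.  So [H] is degenerate iff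
   [pi_n(H) <= |R(H)| - 1 + e] eventually, for every [e > 0].
   Subgraphs: adding to an [H']-free [G] the complete layers of the sizes in
   [R(H) \ R(H')] keeps it [H]-free, so the excess [pi_n - |R| + 1] can only
   shrink when passing from [H] to [H'].
   Flags: an injection [V(H) -> [n]] maps at most [|H| - 1 = |R(H)| - 1] edges of
   the flag [H] into an [H]-free [G], and on average it maps [h_n(G)] of them.
   Blowups (supersaturation): if [h_n(G) > |R(H)| - 1 + e], a positive fraction
   of the pullbacks of [G] to a fixed [[m]] are denser than [pi_m(H)] and so
   contain [H]; some copy of [H] recurs in a positive fraction of the injections
   [[m] -> [n]], and Erdős' box theorem for dense sets of [m]-tuples turns these
   recurrences into a copy of the blowup. *)

Section EdgeTypes.
Variable V : finType.
Implicit Types H : {set {set V}}.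

Lemma edge_types_uniq H : uniq (edge_types H).
Proof. exact: undup_uniq. Qed.

Lemma mem_edge_types H k : (k \in edge_types H) = [exists F in H, #|F| == k].
Proof.
rewrite /edge_types mem_undup; apply/mapP/existsP => [[F]|[F /andP[FH /eqP <-]]].
  by rewrite mem_enum => FH ->; exists F; rewrite FH eqxx.
by exists F; rewrite ?mem_enum.
Qed.

Lemma card_mem_edge_types H F : F \in H -> #|F| \in edge_types H.
Proof. by move=> FH; rewrite mem_edge_types; apply/existsP; exists F; rewrite FH eqxx. Qed.

Lemma in_edge_types H (P : pred nat) :
  (forall F, F \in H -> P #|F|) -> {in edge_types H, forall k, P k}.
Proof. by move=> HP k; rewrite mem_edge_types => /existsP[F /andP[/HP + /eqP <-]]. Qed.

Lemma edge_types_leq_card H : {in edge_types H, forall k, k <= #|V|}%N.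
Proof. by apply: in_edge_types => F _; apply: max_card. Qed.

Lemma size_edge_types_gt0 H : (0 < #|H|)%N -> (0 < size (edge_types H))%N.
Proof.
by rewrite card_gt0 => /set0Pn[F /card_mem_edge_types]; case: (edge_types H).
Qed.

End EdgeTypes.

Lemma subgraphP (V1 V2 : finType) (H1 : {set {set V1}}) (H2 : {set {set V2}}) :
  reflect (exists f : {ffun V1 -> V2}, injective f /\ forall F, F \in H1 -> f @: F \in H2)
          (subgraph H1 H2).
Proof.
apply: (iffP existsP) => [[f /andP[/injectiveP fi /forall_inP hf]]|[f [fi hf]]].
  by exists f.
by exists f; apply/andP; split; [apply/injectiveP | apply/forall_inP].
Qed.

Lemma subgraph_trans (V1 V2 V3 : finType) (H1 : {set {set V1}}) (H2 : {set {set V2}})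
    (H3 : {set {set V3}}) : subgraph H1 H2 -> subgraph H2 H3 -> subgraph H1 H3.
Proof.
move=> /subgraphP[f [fi hf]] /subgraphP[g [gi hg]]; apply/subgraphP.
exists [ffun x => g (f x)]; split => [x y|F FH]; first by rewrite !ffunE => /gi /fi.
rewrite (eq_imset _ (ffunE _)) imset_comp; exact/hg/hf.
Qed.

Lemma edge_types_subgraph (V1 V2 : finType) (H1 : {set {set V1}}) (H2 : {set {set V2}}) :
  subgraph H1 H2 -> {subset edge_types H1 <= edge_types H2}.
Proof.
move=> /subgraphP[f [fi hf]]; apply: in_edge_types => F FH.
by rewrite -(card_imset F fi); apply/card_mem_edge_types/hf.
Qed.

Section Density.
Variable R : realType.

Lemma sumr_partition_seq (T : finType) (A : pred T) (h : T -> nat) (s : seq nat)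
    (F : T -> R) : uniq s -> (forall i, A i -> h i \in s) ->
  \sum_(i in A) F i = \sum_(k <- s) \sum_(i in A | h i == k) F i.
Proof.
move=> us hs; under [RHS]eq_bigr => k _ do rewrite big_mkcondr.
rewrite exchange_big /=; apply: eq_bigr => i Ai; rewrite -big_mkcond /=.
rewrite (eq_bigl (pred1 (h i))); last by move=> k; rewrite /= eq_sym.
by rewrite big_const_seq (count_uniq_mem _ us) hs /= ?addr0.
Qed.

Lemma card_layer_leq n (G : {set {set 'I_n}}) k :
  (#|[pred F in G | #|F| == k]| <= 'C(n, k))%N.
Proof.
rewrite -[n in 'C(n, _)]card_ord -card_draws.
by apply/subset_leq_card/fintype.subsetP => F; rewrite !inE => /andP[].
Qed.

Lemma sum_layer_inv_binom n (G : {set {set 'I_n}}) k :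
  \sum_(F in G | #|F| == k) ('C(n, #|F|))%:R^-1 =
  #|[pred F in G | #|F| == k]|%:R / ('C(n, k))%:R :> R.
Proof.
rewrite (eq_bigr (fun _ => ('C(n, k))%:R^-1)) => [|F /andP[_ /eqP ->] //].
by rewrite sumr_const -[_ *+ _]mulr_natr mulrC.
Qed.

Lemma hdens_ge0 n (G : {set {set 'I_n}}) : 0 <= hdens R G.
Proof. by apply: sumr_ge0 => F _; rewrite invr_ge0 ler0n. Qed.

Lemma hdens_le_size_edge_types n (G : {set {set 'I_n}}) :
  hdens R G <= (size (edge_types G))%:R.
Proof.
rewrite /hdens (@sumr_partition_seq _ _ (fun F : {set 'I_n} => #|F|) (edge_types G)) /=;
  [|exact: edge_types_uniq | exact: card_mem_edge_types].
rewrite -sum1_size natr_sum; apply: ler_sum => k _; rewrite sum_layer_inv_binom.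
have [->|C0] := eqVneq 'C(n, k) 0%N; first by rewrite invr0 mulr0.
by rewrite ler_pdivrMr ?ltr0n ?lt0n // mul1r ler_nat card_layer_leq.
Qed.

Definition layers n (s : seq nat) : {set {set 'I_n}} := [set F : {set 'I_n} | #|F| \in s].

Lemma hdens_layers n (s : seq nat) : uniq s -> {in s, forall k, k <= n}%N ->
  hdens R (layers n s) = (size s)%:R.
Proof.
move=> us sn; rewrite /hdens (@sumr_partition_seq _ _ (fun F : {set 'I_n} => #|F|) s) //;
  last by move=> F FG; move: (FG : F \in layers n s); rewrite inE.
rewrite -sum1_size natr_sum !big_seq; apply: eq_bigr => k ks.
rewrite sum_layer_inv_binom.
have -> : #|[pred F in layers n s | #|F| == k]| = 'C(n, k).
  rewrite -[n in 'C(n, _)]card_ord -card_draws; apply: eq_card => F.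
  by rewrite !inE; case: eqP => [->|]; rewrite ?ks ?andbF.
by rewrite divff // pnatr_eq0 -lt0n bin_gt0 sn.
Qed.

End Density.

Definition trivial_bound (R : realType) (V : finType) (H : {set {set V}}) : R :=
  (size (edge_types H))%:R - 1.

Section PiN.
Variables (R : realType) (V : finType) (H : {set {set V}}).

Lemma pi_n_ge0 n : 0 <= pi_n R H n.
Proof.
rewrite /pi_n; elim/big_ind: _ => // [x y x0 y0|G _]; first by rewrite le_max x0.
exact: hdens_ge0.
Qed.

Lemma hdens_le_pi_n n (G : {set {set 'I_n}}) :
  {subset edge_types G <= edge_types H} -> ~~ subgraph H G -> hdens R G <= pi_n R H n.
Proof. by move=> /allP GH nHG; apply: le_bigmax_cond; rewrite GH nHG. Qed.

Lemma pi_n_le n (M : R) : 0 <= M ->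
  (forall G : {set {set 'I_n}}, {subset edge_types G <= edge_types H} ->
     ~~ subgraph H G -> hdens R G <= M) ->
  pi_n R H n <= M.
Proof. by move=> M0 hM; apply: bigmax_le => // G /andP[/allP]; apply: hM. Qed.

Lemma trivial_bound_ge0 : (0 < #|H|)%N -> 0 <= trivial_bound R H.
Proof. by move=> /size_edge_types_gt0 r0; rewrite subr_ge0 ler1n. Qed.

Lemma trivial_bound_le_pi_n n : (0 < #|H|)%N -> (#|V| <= n)%N ->
  trivial_bound R H <= pi_n R H n.
Proof.
move=> H0 Vn; have := H0; rewrite card_gt0 => /set0Pn[F0 F0H].
have F0e := card_mem_edge_types F0H.
set s := rem #|F0| (edge_types H).
have us : uniq s by rewrite rem_uniq ?edge_types_uniq.
have mem_s : s =i [predD1 edge_types H & #|F0|] by apply/mem_rem_uniq/edge_types_uniq.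
have sn : {in s, forall k, k <= n}%N.
  by move=> k; rewrite mem_s => /andP[_ /edge_types_leq_card/leq_trans]; apply.
have -> : trivial_bound R H = hdens R (layers n s).
  rewrite hdens_layers // size_rem // /trivial_bound.
  by rewrite -[in LHS](prednK (size_edge_types_gt0 H0)) mulrS addrC addrK.
apply: hdens_le_pi_n.
  by apply: in_edge_types => F; rewrite inE mem_s => /andP[].
apply/subgraphP => -[f [fi /(_ F0 F0H)]].
by rewrite inE mem_s (card_imset _ fi) inE eqxx.
Qed.

Lemma degenerate_pi_n_le : degenerate R H ->
  forall e : R, 0 < e -> exists N, forall n, (N <= n)%N -> pi_n R H n <= trivial_bound R H + e.
Proof.
move=> /cvgrPdist_le dH e e0; have [N _ hN] := dH e e0.
by exists N => n /hN; rewrite ler_distlC => /andP[].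
Qed.

Lemma pi_n_le_degenerate : (0 < #|H|)%N ->
  (forall e : R, 0 < e -> exists N, forall n, (N <= n)%N -> pi_n R H n <= trivial_bound R H + e) ->
  degenerate R H.
Proof.
move=> H0 hH; apply/cvgrPdist_le => e e0; have [N hN] := hH e e0.
exists (maxn N #|V|) => // n /=; rewrite geq_max => /andP[Nn Vn].
rewrite ler_distlC hN // andbT; apply: le_trans (trivial_bound_le_pi_n H0 Vn).
by rewrite lerBlDr lerDl ltW.
Qed.

Lemma degenerate_nonempty : degenerate R H -> (0 < #|H|)%N.
Proof.
move=> dH; rewrite lt0n; apply/negP => /eqP H0.
have [|N /(_ N (leqnn N))] := degenerate_pi_n_le dH (e := 1 / 2); first by rewrite divr_gt0.
have : (size (edge_types H) <= #|H|)%N by rewrite (leq_trans (size_undup _)) // size_map -cardE.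
by rewrite H0 leqn0 /trivial_bound => /eqP ->; have := pi_n_ge0 N; lra.
Qed.

End PiN.

Lemma subgraph_nonempty (W V : finType) (H' : {set {set W}}) (H : {set {set V}}) :
  subgraph H' H -> (0 < #|H'|)%N -> (0 < #|H|)%N.
Proof.
move=> /subgraphP[f [_ hf]]; rewrite !card_gt0 => /set0Pn[F /hf fF].
by apply/set0Pn; exists (f @: F).
Qed.

Section SubgraphDegenerate.
Variable R : realType.

Lemma hdens_setU_layers n (G : {set {set 'I_n}}) (s : seq nat) :
  uniq s -> {in s, forall k, k <= n}%N -> {in edge_types G, forall k, k \notin s} ->
  hdens R (G :|: layers n s) = hdens R G + (size s)%:R.
Proof.
move=> us sn Gs; rewrite -(hdens_layers R us sn) /hdens -bigU /=; last first.
  apply/pred0P => F /=; apply/negP => /andP[/card_mem_edge_types/Gs].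
  by rewrite inE => /negP.
by apply: eq_bigl => F; rewrite !inE.
Qed.

Lemma pi_n_excess_subgraph (W V : finType) (H' : {set {set W}}) (H : {set {set V}}) n :
  (0 < #|H'|)%N -> subgraph H' H -> (#|V| <= n)%N ->
  pi_n R H' n - trivial_bound R H' <= pi_n R H n - trivial_bound R H.
Proof.
move=> H'0 H'H Vn; have etH'H := edge_types_subgraph H'H.
set s := [seq k <- edge_types H | k \notin edge_types H'].
have us : uniq s by rewrite filter_uniq ?edge_types_uniq.
have sn : {in s, forall k, k <= n}%N.
  by move=> k; rewrite mem_filter => /andP[_ /edge_types_leq_card/leq_trans]; apply.
have size_s : trivial_bound R H = trivial_bound R H' + (size s)%:R.
  rewrite /trivial_bound.
  have /perm_size <- : perm_eq [seq k <- edge_types H | k \in edge_types H'] (edge_types H').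
    apply: uniq_perm; rewrite ?filter_uniq ?edge_types_uniq // => k.
    by rewrite mem_filter andb_idr //; apply: etH'H.
  rewrite !size_filter addrAC -natrD.
  by congr (_%:R - 1); rewrite -(count_predC (mem (edge_types H')) (edge_types H)) addnC.
suff : pi_n R H' n <= pi_n R H n - (size s)%:R by rewrite size_s; lra.
apply: pi_n_le => [|G etG nH'G].
  have := trivial_bound_le_pi_n R (subgraph_nonempty H'H H'0) Vn.
  by have := trivial_bound_ge0 R H'0; rewrite size_s; lra.
have Gs : {in edge_types G, forall k, k \notin s}.
  by move=> k /etG kH'; rewrite mem_filter kH'.
rewrite lerBrDr -(hdens_setU_layers us sn Gs); apply: hdens_le_pi_n.
  apply: in_edge_types => F; rewrite !inE => /orP[/card_mem_edge_types/etG/etH'H //|].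
  by rewrite mem_filter => /andP[].
apply: contra nH'G => /(subgraph_trans H'H)/subgraphP[g [gi hg]].
apply/subgraphP; exists g; split => // F FH; have := hg F FH.
by rewrite !inE mem_filter (card_imset _ gi) card_mem_edge_types ?orbF.
Qed.

Lemma degenerate_subgraph (W V : finType) (H' : {set {set W}}) (H : {set {set V}}) :
  degenerate R H -> (0 < #|H'|)%N -> subgraph H' H -> degenerate R H'.
Proof.
move=> dH H'0 H'H; apply: pi_n_le_degenerate => // e e0.
have [N hN] := degenerate_pi_n_le dH e0.
exists (maxn N #|V|) => n; rewrite geq_max => /andP[/hN hn Vn].
by have := pi_n_excess_subgraph H'0 H'H Vn; lra.
Qed.

End SubgraphDegenerate.

Lemma perm_imset_eq (T : finType) (A B : {set T}) : #|A| = #|B| ->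
  exists s : {perm T}, s @: A = B.
Proof.
move: {2}#|A :\: B| (erefl #|A :\: B|) => k; elim: k A => [|k IH] A hk hAB.
  exists 1%g; have sAB : A \subset B by rewrite -finset.setD_eq0 -cards_eq0 hk.
  have -> : A = B by apply/eqP; rewrite eqEcard sAB hAB leqnn.
  by rewrite -[RHS]imset_id; apply: eq_imset => z; rewrite perm1.
have : (0 < #|A :\: B|)%N by rewrite hk.
rewrite card_gt0 => /set0Pn[x]; rewrite inE => /andP[xB xA].
have : (0 < #|B :\: A|)%N.
  by have := cardsID B A; have := cardsID A B; rewrite finset.setIC; lia.
rewrite card_gt0 => /set0Pn[y]; rewrite inE => /andP[yA yB].
have mem_tA z : (z \in tperm x y @: A) = (tperm x y z \in A).
  by rewrite -{1}[z](tpermK x y) mem_imset //; apply: perm_inj.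
have hD : (tperm x y @: A) :\: B = (A :\: B) :\ x.
  apply/setP => z; rewrite !inE mem_tA.
  have [->|zx] := eqVneq z x; first by rewrite tpermL (negbTE yA) andbF.
  have [->|zy] := eqVneq z y; first by rewrite yB.
  by rewrite tpermD // eq_sym.
have hk' : #|(tperm x y @: A) :\: B| = k.
  by move: (cardsD1 x (A :\: B)); rewrite hD inE xA xB hk add1n => -[].
have [|s hs] := IH _ hk'; first by rewrite card_imset //; apply: perm_inj.
by exists (tperm x y * s)%g; rewrite -hs -imset_comp; apply: eq_imset => z; rewrite permM.
Qed.

Definition injections (D : finType) n := [set f : {ffun D -> 'I_n} | injectiveb f].

Definition injections_onto (D : finType) n (F : {set D}) (A : {set 'I_n}) :=
  [set f in injections D n | f @: F == A].

Section InjectionsOnto.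
Variables (D : finType) (n : nat) (F : {set D}).

Lemma card_injections_onto_perm (A : {set 'I_n}) (s : {perm 'I_n}) :
  (#|injections_onto F A| <= #|injections_onto F (s @: A)|)%N.
Proof.
pose sf (f : {ffun D -> 'I_n}) := [ffun x => s (f x)].
have sf_inj : injective sf.
  move=> f g /ffunP fg; apply/ffunP => x; apply: (@perm_inj _ s).
  by have := fg x; rewrite !ffunE.
rewrite -(card_imset (injections_onto F A) sf_inj).
apply/subset_leq_card/fintype.subsetP => g /imsetP[f].
rewrite !inE => /andP[/injectiveP fi /eqP <-] ->; apply/andP; split.
  by apply/injectiveP => x y; rewrite !ffunE => /perm_inj /fi.
by rewrite -imset_comp; apply/eqP/eq_imset => x; rewrite /= ffunE.
Qed.

Lemma card_injections_onto_eq (A B : {set 'I_n}) :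
  #|A| = #|B| -> #|injections_onto F A| = #|injections_onto F B|.
Proof.
move=> /perm_imset_eq[s <-]; apply/eqP; rewrite eqn_leq card_injections_onto_perm /=.
have {2}-> : A = (s^-1)%g @: (s @: A).
  by rewrite -imset_comp -[LHS]imset_id; apply: eq_imset => z /=; rewrite permK.
exact: card_injections_onto_perm.
Qed.

Lemma injections_onto_card_neq (A : {set 'I_n}) :
  #|A| != #|F| -> #|injections_onto F A| = 0%N.
Proof.
move=> AF; apply/eqP; rewrite cards_eq0; apply/eqP/setP => f; rewrite !inE.
by apply/negP => /andP[/injectiveP fi /eqP fFA]; move: AF; rewrite -fFA card_imset ?eqxx.
Qed.

Lemma sum_card_injections_onto :
  (\sum_(A : {set 'I_n} | #|A| == #|F|) #|injections_onto F A|)%N = #|injections D n|.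
Proof.
rewrite [RHS]cardE -sum1_size big_enum /=.
rewrite (partition_big (fun f : {ffun D -> 'I_n} => f @: F) (fun A => #|A| == #|F|)) /=.
  apply: eq_bigr => A _; rewrite cardE -sum1_size big_enum /=.
  by apply: eq_bigl => f; rewrite !inE.
by move=> f; rewrite inE => /injectiveP fi; rewrite card_imset.
Qed.

Lemma card_injections_onto (A : {set 'I_n}) : #|A| = #|F| ->
  (#|injections_onto F A| * 'C(n, #|F|))%N = #|injections D n|.
Proof.
move=> AF; rewrite -sum_card_injections_onto.
rewrite (eq_bigr (fun _ => #|injections_onto F A|)) => [|B /eqP BF]; last first.
  by apply: card_injections_onto_eq; rewrite AF BF.
rewrite sum_nat_const mulnC; congr (_ * _)%N.
by rewrite -[n in 'C(n, _)]card_ord -card_draws; apply: eq_card => B; rewrite !inE.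
Qed.

End InjectionsOnto.

Lemma sum_injections_imset_mem (R : realType) (D : finType) n (F : {set D})
    (G : {set {set 'I_n}}) :
  \sum_(f in injections D n) ((f @: F) \in G)%:R =
  #|injections D n|%:R * \sum_(A in G | #|A| == #|F|) ('C(n, #|A|))%:R^-1 :> R.
Proof.
have indicator (f : {ffun D -> 'I_n}) :
    ((f @: F) \in G)%:R = \sum_(A in G) (f @: F == A)%:R :> R.
  have [fFG|fFG] := boolP (f @: F \in G); last first.
    by rewrite big1 // => A AG; case: eqP => // fFA; rewrite fFA AG in fFG.
  rewrite (bigD1 (f @: F)) //= eqxx big1 ?addr0 // => A /andP[_ AfF].
  by rewrite eq_sym (negbTE AfF).
rewrite (eq_bigr _ (fun f _ => indicator f)) exchange_big mulr_sumr [RHS]big_mkcondr /=.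
apply: eq_bigr => A AG.
have -> : \sum_(f in injections D n) (f @: F == A)%:R = #|injections_onto F A|%:R :> R.
  rewrite -natr_sum -sum1_card; congr _%:R.
  rewrite big_mkcond [RHS]big_mkcond /=; apply: eq_bigr => f _.
  by rewrite !inE; case: (injectiveb f); case: eqP.
have [AF|AF] := eqVneq #|A| #|F|; last by rewrite injections_onto_card_neq.
have C0 : 'C(n, #|A|) != 0%N by rewrite -lt0n bin_gt0 -[X in (_ <= X)%N]card_ord max_card.
by rewrite -(card_injections_onto AF) -AF natrM mulrK // unitfE pnatr_eq0.
Qed.

Section Flag.
Variables (R : realType) (V : finType) (H : {set {set V}}).
Hypothesis flagH : is_flag H.

Lemma size_edge_types_flag : size (edge_types H) = #|H|.
Proof.
rewrite /edge_types undup_id ?size_map -?cardE // map_inj_in_uniq ?enum_uniq //.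
by move=> F1 F2; rewrite !mem_enum; apply: flagH.
Qed.

Lemma sum_injections_flag_edges n (G : {set {set 'I_n}}) :
  {subset edge_types G <= edge_types H} ->
  \sum_(f in injections V n) \sum_(F in H) ((f @: F) \in G)%:R =
  #|injections V n|%:R * hdens R G.
Proof.
move=> GH; rewrite exchange_big /=.
rewrite (eq_bigr _ (fun F _ => sum_injections_imset_mem R F G)) -mulr_sumr.
congr (_ * _); rewrite /hdens; under eq_bigr => F _ do rewrite big_mkcondr /=.
rewrite exchange_big /=; apply: eq_bigr => A AG; rewrite -big_mkcondr /=.
have := GH _ (card_mem_edge_types AG); rewrite mem_edge_types.
move=> /existsP[F0 /andP[F0H /eqP F0A]].
rewrite (bigD1 F0) /= ?F0H ?F0A ?eqxx // big1 ?addr0 // => F /andP[/andP[FH /eqP FA] FF0].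
by rewrite (flagH FH F0H) ?eqxx ?FA ?F0A in FF0.
Qed.

Lemma flag_hdens_le n (G : {set {set 'I_n}}) : (#|V| <= n)%N ->
  {subset edge_types G <= edge_types H} -> ~~ subgraph H G ->
  hdens R G <= trivial_bound R H.
Proof.
move=> Vn GH nHG.
have inj0 : (0 < #|injections V n|)%N by rewrite card_inj_ffuns card_ord ffact_gt0.
rewrite -(@ler_pM2l R #|injections V n|%:R) ?ltr0n // -sum_injections_flag_edges //.
rewrite -[X in X%:R * _]sum1_card natr_sum mulr_suml; apply: ler_sum => f.
rewrite inE => /injectiveP fi; rewrite mul1r.
have /existsP[F0] : [exists F in H, f @: F \notin G].
  rewrite -negb_forall_in; apply: contra nHG => /forall_inP fH.
  by apply/subgraphP; exists f.
move=> /andP[F0H F0G]; rewrite (bigD1 F0) //= (negbTE F0G) add0r.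
apply: le_trans (_ : \sum_(F in H | F != F0) 1 <= _).
  by apply: ler_sum => F _; case: (_ \in G).
rewrite sumr_const /trivial_bound size_edge_types_flag (cardsD1 F0 H) F0H.
by rewrite add1n mulrS addrC addrK ler_nat; apply/eq_leq/eq_card => F; rewrite !inE andbC.
Qed.

Lemma flag_degenerate : (0 < #|H|)%N -> degenerate R H.
Proof.
move=> H0; apply: pi_n_le_degenerate => // e e0; exists #|V| => n Vn.
apply: pi_n_le => [|G GH nHG]; first by rewrite addr_ge0 ?trivial_bound_ge0 ?ltW.
by apply: le_trans (flag_hdens_le Vn GH nHG) _; rewrite lerDl ltW.
Qed.

End Flag.

Lemma exists_ge_mean (R : realDomainType) (T : finType) (P : pred T) (F : T -> R) (a : R) :
  (0 < #|P|)%N -> #|P|%:R * a <= \sum_(i | P i) F i -> exists2 i, P i & a <= F i.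
Proof.
move=> P0 hsum; case: (pickP [pred i | P i && (a <= F i)]) => [i /andP[]|small].
  by exists i.
move: hsum; rewrite leNgt => /negP[]; rewrite mulr_natl -sumr_const.
apply: ltr_sum => [|i Pi]; last first.
  by have := small i; rewrite /= (Pi : P i) /= => /negbT; rewrite -ltNge.
by move/card_gt0P: P0 => [i Pi]; apply/hasP; exists i; rewrite ?mem_index_enum.
Qed.

Lemma expn_subn_leq_ffact a t : ((a - t) ^ t <= a ^_ t)%N.
Proof.
elim: t a => [|t IH] a; first by rewrite expn0 ffactn0.
rewrite ffactnS expnS (_ : a - t.+1 = a.-1 - t)%N; last by lia.
by apply: leq_mul; [lia | exact: IH].
Qed.

Lemma ffact_leq_expn a t : (a ^_ t <= a ^ t)%N.
Proof.
elim: t a => [|t IH] a; first by rewrite ffactn0.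
rewrite ffactnS expnS leq_mul // (leq_trans (IH a.-1)) //.
by case: t {IH} => [|t]; rewrite ?expn0 // leq_exp2r // leq_pred.
Qed.

Lemma binom_ge_expr (R : realFieldType) a t (x : R) : 0 <= x -> x + t%:R <= a%:R ->
  x ^+ t / (t`!)%:R <= ('C(a, t))%:R.
Proof.
move=> x0 hx; have ta : (t <= a)%N by rewrite -(ler_nat R); apply: le_trans hx; rewrite lerDr.
rewrite ler_pdivrMr ?ltr0n ?fact_gt0 // -natrM bin_ffact.
apply: le_trans (_ : ((a - t) ^ t)%N%:R <= _); last by rewrite ler_nat expn_subn_leq_ffact.
by rewrite natrX lerXn2r ?nnegrE ?ler0n // natrB // lerBrDr.
Qed.

Lemma binom_le_expr (R : realFieldType) n t : ('C(n, t))%:R <= n%:R ^+ t / (t`!)%:R :> R.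
Proof.
by rewrite ler_pdivlMr ?ltr0n ?fact_gt0 // -natrM bin_ffact -natrX ler_nat ffact_leq_expn.
Qed.

Section Fiber.
Variables (X : finType) (m : nat) (E : {set m.+1.-tuple X}).

Definition tuple_fiber (w : m.-tuple X) : {set X} := [set x | [tuple of x :: w] \in E].

Lemma sum_card_tuple_fiber : #|E| = (\sum_(w : m.-tuple X) #|tuple_fiber w|)%N.
Proof.
rewrite -sum1_card (reindex (fun p : X * m.-tuple X => [tuple of p.1 :: p.2])) /=; last first.
  exists (fun u : m.+1.-tuple X => (thead u, [tuple of behead u])) => [[x w] _|u _].
    by congr (_, _); apply: val_inj.
  by rewrite /= [RHS]tuple_eta.
rewrite big_mkcond /= -(pair_big xpredT xpredT
  (fun (x : X) (w : m.-tuple X) => if [tuple of x :: w] \in E then 1 else 0)%N).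
rewrite exchange_big /=; apply: eq_bigr => w _.
by rewrite -sum1_card [RHS]big_mkcond; apply: eq_bigr => x _; rewrite inE.
Qed.

Lemma sum_card_subset_tuple_fiber t :
  (\sum_(T : {set X} | #|T| == t) #|[set w | T \subset tuple_fiber w]|
   = \sum_(w : m.-tuple X) 'C(#|tuple_fiber w|, t))%N.
Proof.
under eq_bigr => T _ do rewrite -sum1_card big_mkcond /=.
rewrite exchange_big /=; apply: eq_bigr => w _.
rewrite -cards_draws -sum1_card [RHS]big_mkcond /= big_mkcond /=.
apply: eq_bigr => T _.
by rewrite !inE; case: (#|T| == t); case: (T \subset _); rewrite ?andbF ?andbT.
Qed.

End Fiber.

Section RichFibers.
Variables (R : realFieldType) (X : finType) (m : nat) (E : {set m.+1.-tuple X}) (c : R).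
Hypotheses (c0 : 0 < c) (X0 : (0 < #|X|)%N) (Edense : c * #|X|%:R ^+ m.+1 <= #|E|%:R).

Let n : R := #|X|%:R.

Definition rich_tuples := [set w : m.-tuple X | c * n / 2 <= #|tuple_fiber E w|%:R].

Lemma card_rich_tuples : c / 2 * n ^+ m <= #|rich_tuples|%:R.
Proof.
have n0 : 0 < n by rewrite ltr0n.
have : c * n ^+ m.+1 <= #|rich_tuples|%:R * n + n ^+ m * (c * n / 2).
  apply: le_trans Edense _; rewrite sum_card_tuple_fiber natr_sum (bigID (mem rich_tuples)) /=.
  apply: lerD.
    rewrite -[X in X%:R * _]sum1_card natr_sum mulr_suml.
    by apply: ler_sum => w _; rewrite mul1r ler_nat max_card.
  apply: le_trans (_ : \sum_(w | w \notin rich_tuples) (c * n / 2) <= _).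
    by apply: ler_sum => w; rewrite inE -ltNge => /ltW.
  rewrite sumr_const -(mulr_natl (c * n / 2)).
  apply: ler_wpM2r; first by rewrite divr_ge0 ?mulr_ge0 ?ltW.
  by rewrite -natrX ler_nat -card_tuple max_card.
rewrite exprS => h; rewrite -(ler_pM2r n0); set a := n ^+ m in h *.
set g := #|rich_tuples|%:R in h *; nra.
Qed.

(* Double counting of the pairs [(T, w)] with [T] in the fiber of [w]: each rich
   [w] contributes at least [(c n / 4) ^ t / t!], and there are at most
   [n ^ t / t!] sets [T]. *)
Lemma exists_common_subset t : (t <= #|X|)%N -> 4 * t%:R <= c * n ->
  exists2 T : {set X}, #|T| == t &
    c / 2 * (c / 4) ^+ t * n ^+ m <= #|[set w | T \subset tuple_fiber E w]|%:R.
Proof.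
move=> tX tc; set x := c / 4 * n.
have x0 : 0 <= x by rewrite mulr_ge0 ?divr_ge0 ?ler0n ?ltW.
have xt0 : 0 <= x ^+ t / (t`!)%:R by rewrite divr_ge0 ?exprn_ge0.
have card_t : #|[pred T : {set X} | #|T| == t]| = 'C(#|X|, t).
  by rewrite -card_draws; apply: eq_card => T; rewrite !inE.
apply: exists_ge_mean; first by rewrite card_t bin_gt0.
apply: le_trans (_ : #|rich_tuples|%:R * (x ^+ t / (t`!)%:R) <= _).
  rewrite card_t.
  apply: le_trans (_ : n ^+ t / (t`!)%:R * (c / 2 * (c / 4) ^+ t * n ^+ m) <= _).
    apply: ler_wpM2r; last exact: binom_le_expr.
    by rewrite !mulr_ge0 ?exprn_ge0 ?divr_ge0 ?ler0n ?ltW.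
  have -> : n ^+ t / (t`!)%:R * (c / 2 * (c / 4) ^+ t * n ^+ m) =
            c / 2 * n ^+ m * (x ^+ t / (t`!)%:R).
    by rewrite /x [(c / 4 * n) ^+ t]exprMn; ring.
  exact: ler_wpM2r card_rich_tuples.
rewrite -natr_sum sum_card_subset_tuple_fiber natr_sum.
rewrite (bigID (mem rich_tuples)) /= -[X in X <= _]addr0 lerD ?sumr_ge0 //.
rewrite -[X in X%:R * _]sum1_card natr_sum mulr_suml; apply: ler_sum => w.
rewrite inE mul1r => rich_w; apply: binom_ge_expr => //; apply: le_trans rich_w; rewrite /x; lra.
Qed.

End RichFibers.

(* Erdős' box theorem.  Induct on [m]: choose the first side [T] by
   [exists_common_subset] and recurse on the tuples whose fiber contains [T]. *)
Lemma dense_tuples_box (R : archiRealFieldType) m t (c : R) : 0 < c ->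
  exists N : nat, forall X : finType, (N <= #|X|)%N ->
  forall E : {set m.-tuple X}, c * #|X|%:R ^+ m <= #|E|%:R ->
  exists W : nat -> {set X}, (forall i, i < m -> t <= #|W i|)%N /\
    (forall w : m.-tuple X, (forall i : 'I_m, tnth w i \in W i) -> w \in E).
Proof.
elim: m c => [|m IH] c c0.
  exists 0%N => X _ E hE; exists (fun _ => [set: X]); split => // w _.
  have : (0 < #|E|)%N by rewrite -(ltr_nat R); apply: lt_le_trans hE; rewrite mulr1.
  by rewrite card_gt0 => /set0Pn[w0]; rewrite (tuple0 w) (tuple0 w0).
have c'0 : 0 < c / 2 * (c / 4) ^+ t by rewrite mulr_gt0 ?exprn_gt0 ?divr_gt0.
have [N' hN'] := IH _ c'0.
have q0 : 0 <= 4 * t%:R / c by rewrite divr_ge0 ?mulr_ge0 ?ler0n ?ltW.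
exists (maxn (maxn N' (Num.Def.archi_bound (4 * t%:R / c))) t.+1) => X.
rewrite !geq_max => /andP[/andP[XN' Xq] Xt] E hE.
have tc : 4 * t%:R <= c * #|X|%:R.
  rewrite -ler_pdivrMl // mulrC; apply/ltW; apply: lt_le_trans (archi_boundP q0) _.
  by rewrite ler_nat.
have X0 : (0 < #|X|)%N by apply: leq_ltn_trans Xt.
have [T /eqP cardT hT] := exists_common_subset c0 X0 hE (ltnW Xt) tc.
have [W [hW1 hW2]] := hN' X XN' _ hT.
exists (fun i => if i is j.+1 then W j else T).
split => [[|i] /= im|w hw]; [by rewrite cardT | exact: hW1 |].
have : behead_tuple w \in [set w | T \subset tuple_fiber E w].
  apply: hW2 => i; rewrite tnth_behead; have := hw (inord i.+1).
  by rewrite inordK // ltnS ltn_ord.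
by rewrite inE => /fintype.subsetP/(_ (thead w) (hw ord0)); rewrite inE -tuple_eta.
Qed.

Definition pullback m n (psi : {ffun 'I_m -> 'I_n}) (G : {set {set 'I_n}}) :
  {set {set 'I_m}} := [set F : {set 'I_m} | psi @: F \in G].

Lemma edge_types_pullback m n (psi : {ffun 'I_m -> 'I_n}) (G : {set {set 'I_n}}) :
  injective psi -> {subset edge_types (pullback psi G) <= edge_types G}.
Proof.
move=> psi_inj; apply: in_edge_types => F; rewrite inE => /card_mem_edge_types.
by rewrite card_imset.
Qed.

Section Pullback.
Variables (R : realType) (m n : nat) (G : {set {set 'I_n}}).
Hypothesis Gm : forall A, A \in G -> (#|A| <= m)%N.

Lemma sum_hdens_pullback :
  \sum_(psi in injections 'I_m n) hdens R (pullback psi G) =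
  #|injections 'I_m n|%:R * hdens R G.
Proof.
have hdensE (psi : {ffun 'I_m -> 'I_n}) : hdens R (pullback psi G) =
    \sum_(F : {set 'I_m}) ((psi @: F) \in G)%:R * ('C(m, #|F|))%:R^-1.
  rewrite /hdens big_mkcond; apply: eq_bigr => F _.
  by rewrite inE; case: (_ \in G); rewrite ?mul1r ?mul0r.
rewrite (eq_bigr _ (fun psi _ => hdensE psi)) exchange_big /=.
under eq_bigr => F _ do rewrite -mulr_suml sum_injections_imset_mem.
rewrite /hdens mulr_sumr.
under eq_bigr => F _ do rewrite -mulrA mulr_suml mulr_sumr big_mkcondr /=.
rewrite exchange_big /=; apply: eq_bigr => A AG; rewrite -big_mkcondr /=.
rewrite (eq_bigr (fun _ => #|injections 'I_m n|%:R *
  (('C(n, #|A|))%:R^-1 * ('C(m, #|A|))%:R^-1))) => [|F /eqP -> //].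
rewrite sumr_const.
have -> : #|[pred F : {set 'I_m} | #|A| == #|F|]| = 'C(m, #|A|).
  rewrite -[m in 'C(m, _)]card_ord -card_draws.
  by apply: eq_card => F; rewrite !inE eq_sym.
rewrite -mulr_natr; field.
rewrite !pnatr_eq0 -!lt0n !bin_gt0 Gm //=.
by rewrite -[X in (_ <= X)%N]card_ord max_card.
Qed.

(* Markov's inequality for the pullback densities, which average to [hdens G]
   and are at most [|R(G)|]. *)
Lemma card_dense_pullbacks (b : R) : 0 <= b ->
  #|injections 'I_m n|%:R * (hdens R G - b) <=
  #|[set psi in injections 'I_m n | b < hdens R (pullback psi G)]|%:R *
  (size (edge_types G))%:R.
Proof.
move=> b0; set P := [set psi in _ | _].
have hdens_le psi : psi \in injections 'I_m n ->
    hdens R (pullback psi G) <= (size (edge_types G))%:R.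
  rewrite inE => /injectiveP psi_inj; apply: le_trans (hdens_le_size_edge_types _ _) _.
  by rewrite ler_nat uniq_leq_size ?edge_types_uniq //; apply: edge_types_pullback.
suff : #|injections 'I_m n|%:R * hdens R G <=
    #|P|%:R * (size (edge_types G))%:R + #|injections 'I_m n|%:R * b by lra.
rewrite -sum_hdens_pullback (bigID (mem P)) /=; apply: lerD.
  rewrite (eq_bigl (mem P)) => [|psi]; last by rewrite !inE; case: (injectiveb psi).
  rewrite -[X in X%:R * _]sum1_card natr_sum mulr_suml.
  by apply: ler_sum => psi /setIdP[/hdens_le]; rewrite mul1r.
apply: le_trans (_ : \sum_(psi in injections 'I_m n | psi \notin P) b <= _).
  by apply: ler_sum => psi /andP[psiI]; rewrite inE psiI /= -leNgt.
rewrite sumr_const -(mulr_natl b); apply: ler_wpM2r => //; rewrite ler_nat.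
by apply/subset_leq_card/fintype.subsetP => psi /andP[].
Qed.

End Pullback.

Section BlowupEdges.
Variables (V : finType) (H : {set {set V}}) (s : V -> nat).
Hypothesis s_gt0 : forall v, (0 < s v)%N.

Let g0 : {dffun forall v : V, 'I_(s v)} := [ffun v => Ordinal (s_gt0 v)].

Lemma card_blowup_edge (g : {dffun forall v : V, 'I_(s v)}) (F : {set V}) :
  #|[set Tagged (fun v => 'I_(s v)) (g v) | v in F]| = #|F|.
Proof. by rewrite card_imset // => u v /(congr1 tag). Qed.

Lemma blowup_edge_in (F : {set V}) (g : {dffun forall v : V, 'I_(s v)}) :
  F \in H -> [set Tagged (fun v => 'I_(s v)) (g v) | v in F] \in blowup H s.
Proof. by move=> FH; rewrite inE; apply/existsP; exists F; rewrite FH; apply/existsP; exists g. Qed.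

Lemma mem_edge_types_blowup k : (k \in edge_types (blowup H s)) = (k \in edge_types H).
Proof.
apply/idP/idP; last first.
  rewrite mem_edge_types => /existsP[F /andP[FH /eqP <-]].
  by rewrite -(card_blowup_edge g0) card_mem_edge_types ?blowup_edge_in.
apply: in_edge_types => S; rewrite inE => /existsP[F /andP[FH /existsP[g /eqP ->]]].
by rewrite card_blowup_edge; apply: card_mem_edge_types.
Qed.

Lemma trivial_bound_blowup (R : realType) : trivial_bound R (blowup H s) = trivial_bound R H.
Proof.
rewrite /trivial_bound; congr (_%:R - 1); apply/perm_size/uniq_perm; rewrite ?edge_types_uniq //.
by move=> k; rewrite mem_edge_types_blowup.
Qed.

Lemma card_blowup_gt0 : (0 < #|blowup H s|)%N = (0 < #|H|)%N.
Proof.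
rewrite !card_gt0; apply/set0Pn/set0Pn => [[S]|[F FH]]; last first.
  by exists [set Tagged (fun v => 'I_(s v)) (g0 v) | v in F]; apply: blowup_edge_in.
by rewrite inE => /existsP[F /andP[FH _]]; exists F.
Qed.

End BlowupEdges.

(* A box [W_0 * ... * W_(m-1)] of tuples that all carry the copy [f] of [H]
   into [G] yields the blowup: send the [j]-th vertex of part [v] to the
   [j]-th element of [W (f v)]. *)
Section BoxEmbedding.
Variables (V : finType) (H : {set {set V}}) (s : V -> nat) (m n : nat).
Variables (G : {set {set 'I_n}}) (f : {ffun V -> 'I_m}) (W : nat -> {set 'I_n}).
Hypotheses (s_gt0 : forall v, (0 < s v)%N) (n_gt0 : (0 < n)%N) (f_inj : injective f).
Hypotheses (sW : forall v, (s v <= #|W (f v)|)%N) (W_gt0 : forall i : 'I_m, (0 < #|W i|)%N).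
Hypothesis box_copies : forall w : m.-tuple 'I_n, (forall i : 'I_m, tnth w i \in W i) ->
  injective (tnth w) /\ forall F, F \in H -> [set tnth w (f v) | v in F] \in G.

Let box_elem (i j : nat) : 'I_n := nth (Ordinal n_gt0) (enum (W i)) j.

Let box_elem_in i j : (j < #|W i|)%N -> box_elem i j \in W i.
Proof. by move=> jW; rewrite -mem_enum mem_nth // -cardE. Qed.

Let box_elem_inj i j1 j2 : (j1 < #|W i|)%N -> (j2 < #|W i|)%N ->
  box_elem i j1 = box_elem i j2 -> j1 = j2.
Proof. by move=> j1W j2W /eqP; rewrite nth_uniq ?enum_uniq -?cardE // => /eqP. Qed.

Let box_tuple (k : V -> nat) : m.-tuple 'I_n :=
  [tuple match [pick v | f v == i] with Some v => box_elem i (k v) | None => box_elem i 0 end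
  | i < m].

Let tnth_box_tuple k v : tnth (box_tuple k) (f v) = box_elem (f v) (k v).
Proof.
rewrite tnth_mktuple; case: pickP => [u /eqP /f_inj -> //|].
by move=> /(_ v); rewrite eqxx.
Qed.

Let box_tuple_in k : (forall v, k v < s v)%N -> forall i : 'I_m, tnth (box_tuple k) i \in W i.
Proof.
move=> ks i; rewrite tnth_mktuple; case: pickP => [u /eqP <-|_]; last exact: box_elem_in.
by apply: box_elem_in; apply: leq_trans (ks u) (sW u).
Qed.

Lemma subgraph_blowup_box : subgraph (blowup H s) G.
Proof.
pose phi := [ffun p : {v : V & 'I_(s v)} => box_elem (f (tag p)) (tagged p)].
apply/subgraphP; exists phi; split => [[v1 j1] [v2 j2]|S].
  rewrite !ffunE /= => phi12; have [v12|v12] := eqVneq v1 v2.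
    subst v2; have jW (j : 'I_(s v1)) : (j < #|W (f v1)|)%N by apply: leq_trans (sW v1).
    by rewrite (val_inj (box_elem_inj (jW j1) (jW j2) phi12)).
  pose k u := if u == v1 then val j1 else if u == v2 then val j2 else 0%N.
  have ks u : (k u < s u)%N.
    by rewrite /k; case: eqP => [->|_]; last case: eqP => [->|_]; rewrite ?ltn_ord ?s_gt0.
  have [w_inj _] := box_copies (box_tuple_in ks).
  have : tnth (box_tuple k) (f v1) = tnth (box_tuple k) (f v2).
    by rewrite !tnth_box_tuple /k eqxx eq_sym (negbTE v12) eqxx.
  by move/w_inj/f_inj/eqP; rewrite (negbTE v12).
rewrite inE => /existsP[F /andP[FH /existsP[g /eqP ->]]].
pose k u := val (g u); have ks u : (k u < s u)%N by exact: ltn_ord.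
have [_ copies] := box_copies (box_tuple_in ks).
rewrite -imset_comp (eq_imset _ (_ : _ =1 fun v => tnth (box_tuple k) (f v))) ?copies //.
by move=> v /=; rewrite ffunE tnth_box_tuple.
Qed.

End BoxEmbedding.

Lemma card_injections_ge (R : realFieldType) m n : (m.*2 <= n)%N ->
  (n%:R / 2) ^+ m <= #|injections 'I_m n|%:R :> R.
Proof.
move=> mn; rewrite card_inj_ffuns !card_ord.
apply: le_trans (_ : ((n - m) ^ m)%N%:R <= _); last by rewrite ler_nat expn_subn_leq_ffact.
rewrite natrX lerXn2r ?nnegrE ?divr_ge0 ?ler0n // natrB; last by lia.
by move: mn; rewrite -(ler_nat R) -muln2 natrM; lra.
Qed.

Lemma card_tuples_of_ffun (X : finType) m (A : {set {ffun 'I_m -> X}}) :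
  #|[set w : m.-tuple X | [ffun i => tnth w i] \in A]| = #|A|.
Proof.
rewrite -(on_card_preimset (f := fun w : m.-tuple X => [ffun i => tnth w i])).
  by apply: eq_card => w; rewrite !inE.
exists (fun g : {ffun 'I_m -> X} => [tuple g i | i < m]) => [w _|g _].
  by apply: eq_from_tnth => i; rewrite tnth_mktuple ffunE.
by apply/ffunP => i; rewrite !ffunE tnth_mktuple.
Qed.

Section Supersaturation.
Variables (R : realType) (V : finType) (H : {set {set V}}) (s : V -> nat).
Hypothesis s_gt0 : forall v, (0 < s v)%N.

Lemma subgraph_blowup_dense_copies m (c : R) : 0 < c ->
  exists N, forall n, (N <= n)%N -> forall (G : {set {set 'I_n}}) (f : {ffun V -> 'I_m})
    (P : {set {ffun 'I_m -> 'I_n}}), injective f -> c * n%:R ^+ m <= #|P|%:R ->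
    (forall psi, psi \in P -> injective psi /\ forall F, F \in H -> psi @: (f @: F) \in G) ->
  subgraph (blowup H s) G.
Proof.
move=> c0; set t := (\max_v s v).+1.
have [N hN] := dense_tuples_box m t c0.
exists (maxn N 1) => n; rewrite geq_max => /andP[Nn n_gt0] G f P f_inj Pc copies.
have NX : (N <= #|'I_n|)%N by rewrite card_ord.
have [|W [Wt box_P]] := hN _ NX [set w : m.-tuple 'I_n | [ffun i => tnth w i] \in P].
  by rewrite card_tuples_of_ffun card_ord.
have Wt' (i : 'I_m) : (t <= #|W i|)%N by apply: Wt.
apply: (@subgraph_blowup_box V H s m n G f W) => // [v|i|w /box_P].
- by apply: leq_trans (Wt' (f v)); apply/ltnW; rewrite ltnS (leq_bigmax v).
- exact: leq_trans (Wt' i).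
rewrite inE => /copies[w_inj w_copies]; split => [i j|F /w_copies].
  by move=> wij; apply: w_inj; rewrite !ffunE.
by rewrite -imset_comp; congr (_ \in G); apply: eq_imset => v; rewrite /= ffunE.
Qed.

Lemma exists_frequent_copy m n (G : {set {set 'I_n}}) (P : {set {ffun 'I_m -> 'I_n}}) :
  (#|V| <= m)%N -> (forall psi, psi \in P -> subgraph H (pullback psi G)) ->
  exists2 f : {ffun V -> 'I_m}, injective f &
    #|P|%:R / #|injections V m|%:R <=
    #|[set psi in P | [forall F in H, psi @: (f @: F) \in G]]|%:R :> R.
Proof.
move=> Vm P_copies.
pose Pf (f : {ffun V -> 'I_m}) := [set psi in P | [forall F in H, psi @: (f @: F) \in G]].
have K0 : (0 < #|injections V m|)%N by rewrite card_inj_ffuns card_ord ffact_gt0.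
have card_inj : #|[pred f : {ffun V -> 'I_m} | injectiveb f]| = #|injections V m|.
  by apply: eq_card => f; rewrite !inE.
have : (#|P| <= \sum_(f : {ffun V -> 'I_m} | injectiveb f) #|Pf f|)%N.
  apply: (@leq_trans
    (\sum_(psi in P) \sum_(f : {ffun V -> 'I_m} | injectiveb f) (psi \in Pf f : nat))).
    rewrite -sum1_card; apply: leq_sum => psi psiP.
    have /subgraphP[f [f_inj f_copy]] := P_copies _ psiP.
    rewrite (bigD1 f) /=; last exact/injectiveP.
    rewrite inE psiP; apply/leq_trans/leq_addr; rewrite lt0b.
    by apply/forall_inP => F /f_copy; rewrite inE.
  rewrite exchange_big /=; apply: leq_sum => f _.
  rewrite -sum1_card [X in (_ <= X)%N]big_mkcond [X in (X <= _)%N]big_mkcond /=.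
  by apply: leq_sum => psi _; rewrite inE; case: (psi \in P).
rewrite -(ler_nat R) natr_sum => P_le.
suff [f f_inj le_f] : exists2 f : {ffun V -> 'I_m}, injectiveb f &
    #|P|%:R / #|injections V m|%:R <= #|Pf f|%:R :> R.
  by exists f => //; apply/injectiveP.
apply: (@exists_ge_mean R _ [pred f : {ffun V -> 'I_m} | injectiveb f]
  (fun f => #|Pf f|%:R)); first by rewrite card_inj.
by rewrite card_inj mulrC divfK ?pnatr_eq0 -?lt0n.
Qed.

End Supersaturation.

Section BlowupDegenerate.
Variables (R : realType) (V : finType) (H : {set {set V}}) (s : V -> nat).
Hypotheses (s_gt0 : forall v, (0 < s v)%N) (dH : degenerate R H).

Lemma blowup_supersaturation (e : R) : 0 < e ->
  exists N, forall n, (N <= n)%N -> forall G : {set {set 'I_n}},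
    {subset edge_types G <= edge_types H} -> trivial_bound R H + e < hdens R G ->
  subgraph (blowup H s) G.
Proof.
move=> e0; have [N0 pi_le] := degenerate_pi_n_le dH (divr_gt0 e0 (ltr0n R 4)).
set m := maxn N0 #|V|; have Vm : (#|V| <= m)%N by rewrite leq_maxr.
have pi_m : pi_n R H m <= trivial_bound R H + e / 4 by apply: pi_le; rewrite leq_maxl.
have H0 := degenerate_nonempty dH.
set l := trivial_bound R H in pi_m *; have l0 : 0 <= l by apply: trivial_bound_ge0.
set r := size (edge_types H).
have r0 : 0 < r%:R :> R by rewrite ltr0n size_edge_types_gt0.
set K := #|injections V m|.
have K0 : 0 < K%:R :> R by rewrite ltr0n /K /injections card_inj_ffuns card_ord ffact_gt0.
set c := e / 2 / r%:R / K%:R / 2 ^+ m.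
have c0 : 0 < c by rewrite !divr_gt0 ?exprn_gt0.
have [N1 hN1] := @subgraph_blowup_dense_copies R V H s s_gt0 m c c0.
exists (maxn N1 m.*2) => n; rewrite geq_max => /andP[nN1 nm] G GH Gdense.
have Gm A : A \in G -> (#|A| <= m)%N.
  by move=> /card_mem_edge_types/GH/edge_types_leq_card/leq_trans; apply; rewrite leq_maxr.
set P := [set psi in injections 'I_m n | l + e / 2 < hdens R (pullback psi G)].
have P_copies psi : psi \in P -> subgraph H (pullback psi G).
  rewrite !inE => /andP[/injectiveP psi_inj]; apply: contraTT => nH.
  rewrite -leNgt; apply: le_trans (@hdens_le_pi_n R V H m _ _ nH) _.
    by move=> k /(edge_types_pullback psi_inj)/GH.
  by apply: le_trans pi_m _; lra.
have [f f_inj Pf] := @exists_frequent_copy R V H m n G P Vm P_copies.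
apply: (hN1 n nN1 G f _ f_inj _ _) => [|psi].
  apply: le_trans Pf; rewrite ler_pdivlMr // -(ler_pM2r r0).
  have -> : c * n%:R ^+ m * K%:R * r%:R = e / 2 * (n%:R / 2) ^+ m.
    by rewrite /c expr_div_n; field; rewrite ?gt_eqF ?exprn_gt0.
  have b0 : 0 <= l + e / 2 by lra.
  apply: le_trans (_ : e / 2 * #|injections 'I_m n|%:R <= _).
    by rewrite ler_wpM2l ?card_injections_ge //; lra.
  apply: le_trans (_ : #|injections 'I_m n|%:R * (hdens R G - (l + e / 2)) <= _).
    by rewrite mulrC ler_wpM2l //; lra.
  apply: le_trans (card_dense_pullbacks Gm b0) _; rewrite ler_wpM2l // ler_nat.
  by rewrite uniq_leq_size ?edge_types_uniq.
by rewrite !inE => /andP[/andP[/injectiveP psi_inj _] /forall_inP].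
Qed.

Lemma blowup_degenerate : degenerate R (blowup H s).
Proof.
have H0 := degenerate_nonempty dH.
apply: pi_n_le_degenerate; first by rewrite card_blowup_gt0.
move=> e e0; have [N hN] := blowup_supersaturation e0; exists N => n Nn.
rewrite trivial_bound_blowup //; apply: pi_n_le => [|G GH nHG].
  by rewrite addr_ge0 ?trivial_bound_ge0 ?ltW.
rewrite leNgt; apply: contra nHG => /hN; apply => // k /GH.
by rewrite mem_edge_types_blowup.
Qed.

End BlowupDegenerate.

Theorem mainTheorem12 (R : realType) :
  (forall (V : finType) (H : {set {set V}}),
     degenerate R H ->
     (forall (W : finType) (H' : {set {set W}}),
        (0 < #|H'|)%N -> subgraph H' H -> degenerate R H') /\
     (forall s : V -> nat, (forall i, 0 < s i)%N -> degenerate R (blowup H s))) /\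
  (forall (V : finType) (H : {set {set V}}) (s : V -> nat),
     is_flag H -> (forall i, 0 < s i)%N ->
     forall (W : finType) (H' : {set {set W}}),
       (0 < #|H'|)%N -> subgraph H' (blowup H s) -> degenerate R H').
Proof.
split=> [V H dH|V H s flagH s_gt0 W H' H'0 H'sub].
  split=> [W H' H'0 H'H|s s_gt0]; first exact: degenerate_subgraph dH H'0 H'H.
  exact: blowup_degenerate.
have H0 : (0 < #|H|)%N.
  by rewrite -(card_blowup_gt0 H s_gt0); apply: subgraph_nonempty H'sub H'0.
exact: degenerate_subgraph (blowup_degenerate s_gt0 (flag_degenerate flagH H0)) H'0 H'sub.
Qed.
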